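(* Let $(\mathsf{X},\mu)$, $(\mathsf{Y},\nu)$ be Polish probability spaces (with $d$ a metric on $\mathsf{X}$), $c:\mathsf{X}\times\mathsf{Y}\to[0,\infty)$ continuous, $\pi_\varepsilon$ the $(c,\varepsilon)$-cyclically invariant coupling for each $\varepsilon>0$ (assumed to exist), and assume $\pi_\varepsilon\to\pi_*$ weakly as $\varepsilon\to0$ for some $\pi_*\in\Pi(\mu,\nu)$. Let $\Gamma:=\operatorname{spt}\pi_*$, $\mathsf{X}_0:=\operatorname{proj}_{\mathsf{X}}\Gamma$, $\mathsf{Y}_0:=\operatorname{proj}_{\mathsf{Y}}\Gamma$. Assume: (a) $\Gamma=\operatorname{graph}T$ for a map $T:\mathsf{X}_0\to\mathsf{Y}$; (b) $\mathsf{X}_0$ is arcwise connected, i.e., any two points are connected by a continuous curve in $\mathsf{X}_0$ of finite length; (c) for every compact $K\subset\mathsf{X}_0$, uniformly over $x_1,x_2\in K$, $$|c(x_1,T(x_1))+c(x_2,T(x_2))-c(x_1,T(x_2))-c(x_2,T(x_1))|=o(d(x_1,x_2)).$$ If $(x,y),(x',y')\in\mathsf{X}_0\times\mathsf{Y}_0$ are such that $(x',y),(x,y')\in\Gamma$, then $$I(x,y)+I(x',y')\ge c(x,y)+c(x',y')-c(x,y')-c(x',y).$$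
   Context: $\Pi(\mu,\nu)$ is the set of couplings of $\mu,\nu$ and $P:=\mu\otimes\nu$. A coupling $\pi$ is $(c,\varepsilon)$-cyclically invariant if $\pi\sim P$ and its density admits a version $\frac{d\pi}{dP}:\mathsf{X}\times\mathsf{Y}\to(0,\infty)$ with $\prod_{i=1}^k\frac{d\pi}{dP}(x_i,y_i)=\exp\big(-\frac1\varepsilon[\sum_{i=1}^k c(x_i,y_i)-\sum_{i=1}^k c(x_i,y_{i+1})]\big)\prod_{i=1}^k\frac{d\pi}{dP}(x_i,y_{i+1})$ for all $k$ and points, $y_{k+1}:=y_1$. The function $I$ is $I(x,y):=\sup_{k\ge2}\sup_{(x_i,y_i)_{i=2}^k\subset\Gamma}\sup_{\sigma\in\Sigma(k)}\sum_{i=1}^k c(x_i,y_i)-\sum_{i=1}^k c(x_i,y_{\sigma(i)})$ with $(x_1,y_1):=(x,y)$ and $\Sigma(k)$ the permutations of $\{1,\dots,k\}$. *)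

From HB Require Import structures.
From mathcomp Require Import all_boot all_order all_algebra.
From mathcomp Require Import all_classical all_reals all_analysis.
From mathcomp Require Import fingroup perm.
Set Implicit Arguments. Unset Strict Implicit. Unset Printing Implicit Defensive.
Import Order.TTheory GRing.Theory Num.Theory.
Import numFieldNormedType.Exports.
Local Open Scope classical_set_scope.
Local Open Scope ring_scope.

(* Metric spaces with a distinguished point (needed by the library to build the
   Borel measurable structure; harmless since X, Y carry probability measures). *)
#[short(type="pmetricType")]
HB.structure Definition PointedMetric (K : numDomainType) :=
  { M of Metric K M & isPointed M }.

Notation borel X := (g_sigma_algebraType (@open X)).

(* Polish space given with a metric d = mdist compatible with its topology
   (ballEmdist in metricType): separable and d-complete. *)
Definition separable_space (X : topologicalType) : Prop :=
  exists D : set X, countable D /\ closure D = [set: X].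

Definition mcomplete {R : realType} (X : pmetricType R) : Prop :=
  forall u : nat -> X,
    (forall e : R, 0 < e -> exists N : nat, forall m n : nat,
        (N <= m)%N -> (N <= n)%N -> mdist (u m) (u n) < e) ->
    exists l : X, u @ \oo --> l.

Definition polish {R : realType} (X : pmetricType R) : Prop :=
  separable_space X /\ mcomplete X.

Definition is_coupling {R : realType} (X Y : pmetricType R)
  (mu : probability (borel X) R) (nu : probability (borel Y) R)
  (pi : probability (borel X * borel Y)%type R) : Prop :=
  (forall A : set (borel X), measurable A -> pi (A `*` [set: borel Y]) = mu A) /\
  (forall B : set (borel Y), measurable B -> pi ([set: borel X] `*` B) = nu B).

Definition cyclically_invariant {R : realType} (X Y : pmetricType R)
  (mu : probability (borel X) R) (nu : probability (borel Y) R)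
  (c : X * Y -> R) (eps : R)
  (pi : probability (borel X * borel Y)%type R) : Prop :=
  let P := (mu \x nu)%E in
  (forall A : set (borel X * borel Y)%type, measurable A ->
      (pi A = 0%E <-> P A = 0%E)) /\
  (* a version of the density dpi/dP with values in (0, oo) satisfying the
     cyclic identity *)
  exists f : (borel X * borel Y)%type -> R,
    measurable_fun [set: (borel X * borel Y)%type] f /\
    (forall z, 0 < f z) /\
    (forall A : set (borel X * borel Y)%type, measurable A ->
        pi A = (\int[P]_(z in A) (f z)%:E)%E) /\
    (forall (k : nat) (x : 'I_k -> X) (y : 'I_k -> Y),
        \prod_(i < k) f (x i, y i) =
        expR (- (eps^-1) * (\sum_(i < k) c (x i, y i)
                            - \sum_(i < k) c (x i, y (ordS i))))
        * \prod_(i < k) f (x i, y (ordS i))).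

Definition spt {R : realType} (X Y : pmetricType R)
  (pi : probability (borel X * borel Y)%type R) : set (X * Y) :=
  [set z | forall U : set (X * Y), open U -> U z -> (0 < pi U)%E].

Definition curve_length {R : realType} (X : pmetricType R) (gamma : R -> X)
  (a b : R) : \bar R :=
  ereal_sup [set v | exists (n : nat) (s : nat -> R),
     s 0%N = a /\ s n = b /\ (forall i, (i < n)%N -> s i <= s i.+1) /\
     v = (\sum_(i < n) mdist (gamma (s i)) (gamma (s i.+1)))%:E].

Definition arcwise_connected_finite {R : realType} (X : pmetricType R)
  (S : set X) : Prop :=
  forall x1 x2, S x1 -> S x2 ->
    exists gamma : R -> X,
      {within `[0, 1], continuous gamma} /\
      gamma 0 = x1 /\ gamma 1 = x2 /\
      (forall t, 0 <= t <= 1 -> S (gamma t)) /\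
      (curve_length gamma 0 1 < +oo)%E.

(* The function I(x, y), with (x_1, y_1) := (x, y) (index 0 here),
   k >= 2 written as k.+2, sigma a permutation of the k indices. *)
Definition Ifun {R : realType} (X Y : pmetricType R) (c : X * Y -> R)
  (Gamma : set (X * Y)) (x : X) (y : Y) : \bar R :=
  ereal_sup [set v | exists (k : nat) (xs : 'I_k.+2 -> X) (ys : 'I_k.+2 -> Y)
                       (sigma : {perm 'I_k.+2}),
     xs ord0 = x /\ ys ord0 = y /\
     (forall i : 'I_k.+2, i != ord0 -> Gamma (xs i, ys i)) /\
     v = (\sum_(i < k.+2) c (xs i, ys i)
          - \sum_(i < k.+2) c (xs i, ys (sigma i)))%:E].

From mathcomp Require Import all_boot all_order all_algebra.
From mathcomp Require Import all_classical all_reals all_analysis.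
From mathcomp Require Import fingroup perm lra.
Set Implicit Arguments. Unset Strict Implicit. Unset Printing Implicit Defensive.
Import Order.TTheory GRing.Theory Num.Theory.
Import numFieldNormedType.Exports.
Local Open Scope classical_set_scope.
Local Open Scope ring_scope.

(* Join x to x' by a curve of finite length in X_0 and cut it into a chain
   x = z_0, ..., z_m = x' of short steps.  Feeding the cyclically shifted chain
   (z_0, T z_m), (z_1, T z_1), ..., (z_m, T z_m), and the same chain run
   backwards, into the suprema defining I(x, T x') and I(x', T x) bounds
   I(x, y) + I(x', y') from below by the right-hand side plus the sum of the
   swap defects c(z_i, T z_i) + c(z_(i+1), T z_(i+1)) - c(z_i, T z_(i+1))
   - c(z_(i+1), T z_i).  By (c) on the compact image of the curve, each defect
   is at least -e d(z_i, z_(i+1)), so the total error is at most e times the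
   length of the curve. *)

Section FinePartition.
Variables (R : realType) (X : pmetricType R) (g : R -> X).

Lemma within_continuous_mdist (A : set R) (t e : R) :
  {within A, continuous g} -> A t -> 0 < e ->
  exists2 r : R, 0 < r & forall u, A u -> `|t - u| < r -> mdist (g t) (g u) < e.
Proof.
move=> /subspace_continuousP gc At e0.
have /nbhs_ballP[r r0 gr] := gc t At (ball (g t) e) (nbhsx_ballx _ _ e0).
exists r => // u Au tu.
by have := gr u tu Au; rewrite /= ballEmdist.
Qed.

Definition fine_partition (d t : R) (m : nat) (s : nat -> R) : Prop :=
  [/\ s 0%N = 0, s m = t, forall i, (i < m)%N -> s i <= s i.+1,
      forall i, 0 <= s i <= 1 &
      forall i, (i < m)%N -> mdist (g (s i)) (g (s i.+1)) < d].

Lemma fine_partition_rcons (d t u : R) (m : nat) (s : nat -> R) :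
  fine_partition d t m s -> t <= u <= 1 -> mdist (g t) (g u) < d ->
  fine_partition d u m.+1 (fun i => if (i <= m)%N then s i else u).
Proof.
move=> [s0 sm s_mono s01 s_step] /andP[tu u1] gtu.
have u0 : 0 <= u by have /andP[+ _] := s01 m; rewrite sm => /le_trans; apply.
split => [||i|i|i]; rewrite ?leq0n ?ltnn //=.
- rewrite ltnS; case: ltngtP => // [im|->] _; first exact: s_mono.
  by rewrite sm.
- by case: ifP => // _; rewrite u0.
- rewrite ltnS; case: ltngtP => // [im|->] _; first exact: s_step.
  by rewrite sm.
Qed.

(* Continuous induction: some reachable endpoint lies within r of the
   supremum tau of the reachable ones, and one more step of size < d then
   reaches min (tau + r / 2) 1, which forces tau = 1. *)
Lemma exists_fine_partition (d : R) : 0 < d -> {within `[0, 1], continuous g} ->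
  exists m s, (0 < m)%N /\ fine_partition d 1 m s.
Proof.
move=> d0 gc.
pose P t := exists m s, fine_partition d t m s.
have P01 t : P t -> 0 <= t <= 1 by move=> [m [s [_ <- _ s01 _]]].
have P0 : P 0.
  by exists 0%N, (fun=> 0); split => // i; rewrite lexx ler01.
have supP : has_sup P by split; [exists 0 | exists 1 => t /P01/andP[]].
set tau := sup P.
have tau01 : 0 <= tau <= 1.
  rewrite (sup_upper_bound supP P0) /=.
  by apply: ge_sup; [exists 0 | move=> t /P01/andP[]].
have [r r0 g_near] : exists2 r : R, 0 < r &
    forall u, `[0, 1]%classic u -> `|tau - u| < r ->
      mdist (g tau) (g u) < d / 2.
  by apply: within_continuous_mdist gc _ _; rewrite ?divr_gt0 //= in_itv.
have [t Pt tau_t] := sup_adherent r0 supP; rewrite -/tau in tau_t.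
have t_tau : t <= tau := sup_upper_bound supP Pt.
pose tau' := Num.min (tau + r / 2) 1.
have tau'_cases :
    tau' = tau + r / 2 /\ tau + r / 2 <= 1 \/ tau' = 1 /\ 1 < tau + r / 2.
  by rewrite /tau'; case: leP; [left | right].
have Ptau' : P tau'.
  have [m [s Pms]] := Pt; have /andP[t0 t1] := P01 t Pt.
  exists m.+1; eexists; apply: fine_partition_rcons Pms _ _.
    by apply/andP; lra.
  apply: le_lt_trans (metric_triangle _ (g tau) _) _; rewrite metric_sym.
  have : mdist (g tau) (g t) < d / 2.
    by apply: g_near; rewrite /= ?in_itv /= ?t0 ?t1 ?ger0_norm; lra.
  have : mdist (g tau) (g tau') < d / 2.
    by apply: g_near; rewrite /= ?in_itv /= ?ler0_norm; lra.
  lra.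
have tau'1 : tau' = 1.
  have := sup_upper_bound supP Ptau'; rewrite -/tau.
  by case: tau'_cases => -[-> _] //; lra.
move: Ptau'; rewrite tau'1 => -[m [s Pms]].
exists m, s; split => //.
by case: m Pms => // -[s0 s1 _ _ _]; move: s1; rewrite s0; lra.
Qed.

Lemma curve_length_finite_bound (a b : R) : (curve_length g a b < +oo)%E ->
  exists2 B : R, 0 <= B & forall (n : nat) (s : nat -> R),
    s 0%N = a -> s n = b -> (forall i, (i < n)%N -> s i <= s i.+1) ->
    \sum_(i < n) mdist (g (s i)) (g (s i.+1)) <= B.
Proof.
move=> Lfin; exists (`|fine (curve_length g a b)|) => // n s sa sb s_mono.
have Ls : ((\sum_(i < n) mdist (g (s i)) (g (s i.+1)))%:E
           <= curve_length g a b)%E.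
  by apply: ereal_sup_ubound; exists n, s.
move: Lfin Ls; case: (curve_length g a b) => [l| |] //= _.
by rewrite lee_fin => /le_trans; apply; apply: ler_norm.
Qed.

End FinePartition.

Section CyclicChains.
Variables (R : realType) (X Y : pmetricType R) (c : X * Y -> R).
Variables (G : set (X * Y)) (T : X -> Y).

Definition swap_defect (x1 x2 : X) : R :=
  c (x1, T x1) + c (x2, T x2) - c (x1, T x2) - c (x2, T x1).

Lemma Ifun_ge_shift_chain (z : nat -> X) (m : nat) : (0 < m)%N ->
  (forall i, (0 < i <= m)%N -> G (z i, T (z i))) ->
  ((c (z 0%N, T (z m)) - c (z m, T (z m))
    + \sum_(0 <= i < m) (c (z i.+1, T (z i.+1)) - c (z i, T (z i.+1))))%:E
   <= Ifun c G (z 0%N) (T (z m)))%E.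
Proof.
case: m => // k _ zG.
pose ys (i : 'I_k.+2) := if i == ord0 then T (z k.+1) else T (z i).
pose shift : {perm 'I_k.+2} := perm (@ordS_inj k.+2).
apply: ereal_sup_ubound; exists k, (fun i : 'I_k.+2 => z i), ys, shift.
split => //; split; first by rewrite /ys eqxx.
split.
  move=> i i0; rewrite /ys (negbTE i0); apply: zG.
  by rewrite lt0n -(inj_eq val_inj) /= in i0 *; rewrite i0 -ltnS ltn_ord.
have diag : \sum_(i < k.+2) c (z i, ys i) =
    c (z 0%N, T (z k.+1)) + \sum_(i < k.+1) c (z i.+1, T (z i.+1)).
  by rewrite big_ord_recl /ys eqxx.
have shifted : \sum_(i < k.+2) c (z i, ys (shift i)) =
    \sum_(i < k.+1) c (z i, T (z i.+1)) + c (z k.+1, T (z k.+1)).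
  rewrite big_ord_recr /=; congr (_ + _); rewrite /ys.
    apply: eq_bigr => i _; rewrite permE.
    have -> : ordS (widen_ord (leqnSn k.+1) i) = lift ord0 i.
      by apply: val_inj; rewrite /= modn_small // ltnS.
    by [].
  rewrite permE.
  have -> : ordS (@ord_max k.+1) = ord0 by apply: val_inj; rewrite /= modnn.
  by rewrite eqxx.
by rewrite diag shifted big_mkord sumrB; congr EFin; lra.
Qed.

Lemma Ifun_swap_ge (z : nat -> X) (m : nat) : (0 < m)%N ->
  (forall i, (i <= m)%N -> G (z i, T (z i))) ->
  ((c (z 0%N, T (z m)) + c (z m, T (z 0%N))
    - c (z 0%N, T (z 0%N)) - c (z m, T (z m))
    + \sum_(0 <= i < m) swap_defect (z i) (z i.+1))%:E
   <= Ifun c G (z 0%N) (T (z m)) + Ifun c G (z m) (T (z 0%N)))%E.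
Proof.
move=> m0 zG.
have forth := Ifun_ge_shift_chain m0 (fun i hi => zG i (andP hi).2).
pose w i := z (m - i)%N.
have back := @Ifun_ge_shift_chain w m m0 (fun i _ => zG _ (leq_subr i m)).
rewrite /w subn0 subnn in back.
apply: le_trans (leeD forth back); rewrite -EFinD lee_fin.
have -> : \sum_(0 <= i < m) (c (w i.+1, T (w i.+1)) - c (w i, T (w i.+1))) =
    \sum_(0 <= i < m) (c (z i, T (z i)) - c (z i.+1, T (z i))).
  rewrite [RHS]big_nat_rev /=; apply: eq_big_nat => i /andP[_ im].
  by rewrite /w add0n -(subnSK im).
rewrite (eq_bigr (fun i => (c (z i.+1, T (z i.+1)) - c (z i, T (z i.+1)))
                         + (c (z i, T (z i)) - c (z i.+1, T (z i)))));
  last by move=> i _; rewrite /swap_defect; lra.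
rewrite big_split /=; lra.
Qed.

Lemma sum_swap_defect_ge (z : nat -> X) (m : nat) (k : R) :
  (forall i, (i < m)%N ->
     `|swap_defect (z i) (z i.+1)| <= k * mdist (z i) (z i.+1)) ->
  - (k * \sum_(i < m) mdist (z i) (z i.+1))
    <= \sum_(0 <= i < m) swap_defect (z i) (z i.+1).
Proof.
move=> z_defect; rewrite big_mkord mulr_sumr -sumrN; apply: ler_sum => i _.
by have := z_defect i (ltn_ord i); rewrite ler_norml => /andP[].
Qed.

End CyclicChains.

Theorem lemma4p10 (R : realType) (X Y : pmetricType R)
  (hX : polish X) (hY : polish Y)
  (mu : probability (borel X) R) (nu : probability (borel Y) R)
  (c : X * Y -> R) (c_ge0 : forall z, 0 <= c z) (c_cont : continuous c)
  (pi : R -> probability (borel X * borel Y)%type R)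
  (hpi : forall eps : R, 0 < eps ->
     is_coupling mu nu (pi eps) /\ cyclically_invariant mu nu c eps (pi eps))
  (pistar : probability (borel X * borel Y)%type R)
  (hpistar : is_coupling mu nu pistar)
  (hweak : forall f : X * Y -> R, continuous f ->
     (exists M : R, forall z, `|f z| <= M) ->
     (fun eps : R => (\int[pi eps]_z (f z)%:E)%E) @ 0^'+ -->
       (\int[pistar]_z (f z)%:E)%E)
  (T : X -> Y)
  (hgraph : spt pistar =
            [set z | (fst @` spt pistar) z.1 /\ z.2 = T z.1])
  (harc : arcwise_connected_finite (fst @` spt pistar))
  (hc : forall K : set X, compact K -> K `<=` fst @` spt pistar ->
     forall e : R, 0 < e -> exists2 delta : R, 0 < delta &
       forall x1 x2, K x1 -> K x2 -> mdist x1 x2 < delta ->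
         `|c (x1, T x1) + c (x2, T x2) - c (x1, T x2) - c (x2, T x1)|
           <= e * mdist x1 x2)
  (x x' : X) (y y' : Y)
  (hx : (fst @` spt pistar) x) (hx' : (fst @` spt pistar) x')
  (hy : (snd @` spt pistar) y) (hy' : (snd @` spt pistar) y')
  (hx'y : spt pistar (x', y)) (hxy' : spt pistar (x, y')) :
  (Ifun c (spt pistar) x y + Ifun c (spt pistar) x' y' >=
     (c (x, y) + c (x', y') - c (x, y') - c (x', y))%:E)%E.
Proof.
set G := spt pistar in hgraph harc hc hx hx' hx'y hxy' *.
have /seteqP[G_sub G_sup] := hgraph.
have GT p : (fst @` G) p -> G (p, T p) by move=> hp; apply: G_sup.
have -> : y = T x' by have [] := G_sub _ hx'y.
have -> : y' = T x by have [] := G_sub _ hxy'.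
have [g [gc [g0 [g1 [gG g_len]]]]] := harc x x' hx hx'.
have [B B0 g_bound] := curve_length_finite_bound g_len.
apply/lee_subgt0Pr => e e0.
pose e' := e / (B + 1).
have e'0 : 0 < e' by rewrite divr_gt0 // ltr_wpDl.
have e'B : e' * B <= e.
  by rewrite /e' mulrAC ler_pdivrMr ?ltr_wpDl // ler_wpM2l //; lra.
pose K := g @` `[0, 1]%classic.
have cK : compact K by apply: continuous_compact gc _; exact: segment_compact.
have KG : K `<=` fst @` G.
  by move=> _ [t ht <-]; apply: gG; move: ht; rewrite /= in_itv.
have [d d0 hd] := hc K cK KG e' e'0.
have [m [s [m0 [s0 sm s_mono s01 s_step]]]] := exists_fine_partition d0 gc.
pose z i := g (s i).
have zK i : K (z i) by exists (s i); rewrite //= in_itv s01.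
have := Ifun_swap_ge c m0 (fun i _ => GT _ (KG _ (zK i))).
rewrite /z s0 sm g0 g1 -/z; apply: le_trans; rewrite -EFinB lee_fin.
have := sum_swap_defect_ge (c:=c) (T:=T)
  (fun i im => hd _ _ (zK i) (zK i.+1) (s_step i im)).
have := ler_wpM2l (ltW e'0) (g_bound m s s0 sm s_mono).
lra.
Qed.
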